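(* Let $G_1,\dots,G_n$ be finite groups and let $K$ be a simplicial complex on $[n]$ whose 1-skeleton $K^1$ is a chordal graph. Then the image of the faithful representation $\Theta_K:\prod_{K^1}G_i\to\mathrm{Aut}(F_{\rho_K})$ is not contained in the subgroup $\mathrm{IA}_{\rho_K}$.
   Context: $\prod_{K^1}G_i$ is the graph product: the quotient of $G_1*\cdots*G_n$ by the normal closure of $[g_i,g_j]$ for $g_i\in G_i,g_j\in G_j$, $\{i,j\}$ an edge of $K^1$. $F_{\rho_K}$ is the kernel of the natural projection $\prod_{K^1}G_i\to G_1\times\cdots\times G_n$, free of rank $\rho_K$ when $K^1$ is chordal, and $\Theta_K(g)(h)=ghg^{-1}$. $\mathrm{IA}_N$ is the kernel of the map $\mathrm{Aut}(F_N)\to\mathrm{GL}(N,\mathbb Z)$ induced by the action on $H_1(F_N)=\mathbb Z^N$. A graph is chordal if every cycle of length greater than three has an edge joining two nonconsecutive vertices. *)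

From mathcomp Require Import all_boot all_order all_fingroup.
Set Implicit Arguments. Unset Strict Implicit. Unset Printing Implicit Defensive.
Local Open Scope group_scope.

Definition simplicial_complex (n : nat) (K : {set {set 'I_n}}) : Prop :=
  (forall i : 'I_n, [set i] \in K) /\
  (forall s t : {set 'I_n}, s \in K -> t \subset s -> t \in K).

Definition skel1 (n : nat) (K : {set {set 'I_n}}) : rel 'I_n :=
  fun i j => (i != j) && ([set i; j] \in K).

Definition chordal (n : nat) (adj : rel 'I_n) : Prop :=
  forall (s : seq 'I_n) (v0 : 'I_n), uniq s -> 3 < size s ->
    (forall k, k < size s -> adj (nth v0 s k) (nth v0 s (k.+1 %% size s))) ->
    exists a b, [/\ (a < size s) && (b < size s), a != b,
                    b != (a.+1 %% size s), a != (b.+1 %% size s) &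
                    adj (nth v0 s a) (nth v0 s b)].

(** Words in the free product G_1 * ... * G_n: sequences of letters (i, g), g in G_i. *)
Definition letter (n : nat) (G : 'I_n -> finGroupType) := {i : 'I_n & G i}.
Definition word (n : nat) (G : 'I_n -> finGroupType) := seq (letter G).

Definition inv_letter n (G : 'I_n -> finGroupType) (u : letter G) : letter G :=
  existT _ (tag u) (tagged u)^-1.
Definition inv_word n (G : 'I_n -> finGroupType) (w : word G) : word G :=
  rev (map (@inv_letter n G) w).

(** Equality in the graph product over the graph [adj]: the congruence on words
    generated by (i,1) = empty, (i,x)(i,y) = (i,xy), and (i,x)(j,y) = (j,y)(i,x)
    for adj i j.  (Since each generator is invertible this monoid presentation
    presents the group  prod_{adj} G_i.) *)
Inductive gp_eq n (G : 'I_n -> finGroupType) (adj : rel 'I_n) : word G -> word G -> Prop :=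
  | gp_refl w : gp_eq adj w w
  | gp_sym u v : gp_eq adj u v -> gp_eq adj v u
  | gp_trans u v w : gp_eq adj u v -> gp_eq adj v w -> gp_eq adj u w
  | gp_ctx a b u v : gp_eq adj u v -> gp_eq adj (a ++ u ++ b) (a ++ v ++ b)
  | gp_one i : gp_eq adj [:: existT _ i (1 : G i)] [::]
  | gp_mul i (x y : G i) : gp_eq adj [:: existT _ i x; existT _ i y] [:: existT _ i (x * y)]
  | gp_comm i j (x : G i) (y : G j) : adj i j ->
      gp_eq adj [:: existT _ i x; existT _ j y] [:: existT _ j y; existT _ i x].

(** The i-th coordinate of the natural projection prod_{K^1} G_i -> G_1 x ... x G_n. *)
Definition proj n (G : 'I_n -> finGroupType) (i : 'I_n) (w : word G) : G i :=
  foldr (fun u acc => @untag _ (fun j => G j) (G i) 1 i (fun x : G i => x) u * acc) 1 w.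

Definition in_kernel n (G : 'I_n -> finGroupType) (w : word G) : Prop :=
  forall i, proj i w = 1.

Inductive comm_prod n (G : 'I_n -> finGroupType) : word G -> Prop :=
  | cp_nil : comm_prod [::]
  | cp_cons a b w : in_kernel a -> in_kernel b -> comm_prod w ->
      comm_prod (a ++ b ++ inv_word a ++ inv_word b ++ w).

(** Membership in the commutator subgroup [F,F] of F, inside prod_{adj} G_i. *)
Definition in_derived n (G : 'I_n -> finGroupType) (adj : rel 'I_n) (w : word G) : Prop :=
  exists w', comm_prod w' /\ gp_eq adj w w'.

From mathcomp Require Import all_boot all_order all_fingroup.
From mathcomp Require Import ssralg ssrint zify.
Local Open Scope group_scope.
Set Implicit Arguments. Unset Strict Implicit.

(* Suppose first that two non-adjacent vertices i, j carry nontrivial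
   elements x, y.  Reading a word letter by letter moves a point of
   G_i x G_j; counting with signs the i-steps that enter or leave the state
   (x, y) gives an integer invariant of words.  It respects the relations of
   the graph product, because no relation swaps an i-letter with a j-letter,
   and on kernel words it is additive with trivial total displacement, so it
   kills every product of commutators of kernel elements.  It takes the value
   2 on [x, [x, y]], which is therefore not in [F, F].
   Otherwise every pair of letters commutes in the graph product, which is
   then the direct product: the kernel F is trivial, against the hypothesis. *)

Section Letters.
Variables (n : nat) (G : 'I_n -> finGroupType).

Definition coord (m : 'I_n) (u : letter G) : G m :=
  @untag _ (fun k => G k) (G m) 1 m (fun z : G m => z) u.

Lemma coord_id m (z : G m) : coord m (existT _ m z) = z.
Proof. by rewrite /coord (@untagE _ _ _ 1 m _ (existT _ m z) (erefl m)). Qed.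

Lemma coord_other m k (z : G k) : k != m -> coord m (existT _ k z) = 1.
Proof. by move=> ne; rewrite /coord untag_dflt. Qed.

Lemma coord1 m k : coord m (existT _ k (1 : G k)) = 1.
Proof. by case: (eqVneq k m) => [<-|ne]; rewrite ?coord_id ?coord_other. Qed.

Lemma coordM m k (a b : G k) :
  coord m (existT _ k a) * coord m (existT _ k b) = coord m (existT _ k (a * b)).
Proof. by case: (eqVneq k m) => [<-|ne]; rewrite ?coord_id ?coord_other ?mulg1. Qed.

Lemma coordC m k l (a : G k) (b : G l) : k != l ->
  commute (coord m (existT _ k a)) (coord m (existT _ l b)).
Proof.
move=> ne; case: (eqVneq k m) => [ek|nk]; last by rewrite coord_other //; apply/commute_sym/commute1.
by rewrite (@coord_other m l) -?ek 1?eq_sym //; apply: commute1.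
Qed.

Lemma coordV m u : coord m (inv_letter u) = (coord m u)^-1.
Proof.
case: u => k a; rewrite /inv_letter /=.
by case: (eqVneq k m) => [<-|ne]; rewrite ?coord_id ?coord_other ?invg1.
Qed.

Lemma proj_cons m (u : letter G) (w : word G) : proj m (u :: w) = coord m u * proj m w.
Proof. by []. Qed.

Lemma inv_word_cons (u : letter G) (w : word G) :
  inv_word (u :: w) = inv_word w ++ [:: inv_letter u].
Proof. by rewrite /inv_word /= rev_cons cats1. Qed.

Lemma gp_eq_cons (adj : rel 'I_n) (a : letter G) (u v : word G) :
  gp_eq adj u v -> gp_eq adj (a :: u) (a :: v).
Proof. by move=> h; have := gp_ctx [:: a] [::] h; rewrite /= !cats0. Qed.

Lemma gp_eq_catr (adj : rel 'I_n) (b u v : word G) :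
  gp_eq adj u v -> gp_eq adj (u ++ b) (v ++ b).
Proof. exact: (gp_ctx [::] b). Qed.

End Letters.

Section Crossings.
Variables (n : nat) (G : 'I_n -> finGroupType) (i j : 'I_n) (x : G i) (y : G j).

Definition state := (G i * G j)%type.

Definition move (s : state) (u : letter G) : state :=
  (s.1 * coord i u, s.2 * coord j u).

Definition walk (s : state) (w : word G) : state := foldl move s w.

Definition at_xy (s : state) : int := if s == (x, y) then 1%R else 0%R.

Definition crossing (s : state) (u : letter G) : int :=
  if tag u == i then (at_xy (move s u) - at_xy s)%R else 0%R.

Fixpoint crossings (s : state) (w : word G) : int :=
  if w is u :: w' then (crossing s u + crossings (move s u) w')%R else 0%R.

Lemma crossings_cat s a b :
  crossings s (a ++ b) = (crossings s a + crossings (walk s a) b)%R.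
Proof. by elim: a s => [|u a IH] s /=; [lia | rewrite IH; lia]. Qed.

Lemma walk_cat s a b : walk s (a ++ b) = walk (walk s a) b.
Proof. exact: foldl_cat. Qed.

Lemma walk_proj s w : walk s w = (s.1 * proj i w, s.2 * proj j w).
Proof.
elim: w s => [|u w IH] s /=; first by rewrite !mulg1; case: s.
by rewrite IH /move /= !mulgA.
Qed.

Lemma walk_kernel a : in_kernel a -> forall s, walk s a = s.
Proof. by move=> ka s; rewrite walk_proj !ka !mulg1; case: s. Qed.

Lemma move1 s k : move s (existT _ k (1 : G k)) = s.
Proof. by rewrite /move !coord1 !mulg1; case: s. Qed.

Lemma moveM s k (a b : G k) :
  move (move s (existT _ k a)) (existT _ k b) = move s (existT _ k (a * b)).
Proof. by rewrite /move /= -!mulgA !coordM. Qed.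

Lemma moveC s k l (a : G k) (b : G l) : k != l ->
  move (move s (existT _ k a)) (existT _ l b) = move (move s (existT _ l b)) (existT _ k a).
Proof. by move=> ne; rewrite /move /= -!mulgA !(coordC _ _ _ ne). Qed.

Lemma move_other s k (a : G k) : k != i -> k != j -> move s (existT _ k a) = s.
Proof. by move=> ni nj; rewrite /move !coord_other // !mulg1; case: s. Qed.

Lemma crossings_cancel s w :
  crossings s (w ++ inv_word w) = 0%R /\ walk s (w ++ inv_word w) = s.
Proof.
elim: w s => [|u w IH] s //=.
have [c0 w0] := IH (move s u).
rewrite inv_word_cons catA /= crossings_cat c0 w0 walk_cat w0.
have back : move (move s u) (inv_letter u) = s.
  by rewrite /move /= !coordV !mulgK; case: (s).
by rewrite /walk /= back /crossing /= back; split=> //; case: (tag u == i); lia.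
Qed.

Lemma crossings_inv_kernel s a : in_kernel a ->
  crossings s (inv_word a) = (- crossings s a)%R /\ walk s (inv_word a) = s.
Proof.
move=> ka; have [h1 h2] := crossings_cancel s a.
rewrite crossings_cat (walk_kernel ka) in h1; rewrite walk_cat (walk_kernel ka) in h2.
by split=> //; lia.
Qed.

Lemma crossings_comm_prod w : comm_prod w -> forall s, crossings s w = 0%R.
Proof.
elim=> [|a b w' ka kb _ IH] s //.
have [ia wia] := crossings_inv_kernel s ka.
have [ib wib] := crossings_inv_kernel s kb.
rewrite crossings_cat (walk_kernel ka) crossings_cat (walk_kernel kb).
rewrite crossings_cat wia crossings_cat wib ia ib IH; lia.
Qed.

Variable adj : rel 'I_n.
Hypotheses (adj_irr : forall k l, adj k l -> k != l) (nadj_ij : ~~ adj i j)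
  (nadj_ji : ~~ adj j i).

Lemma crossings_swap s k l (a : G k) (b : G l) : adj k l ->
  crossings s [:: existT _ k a; existT _ l b] = crossings s [:: existT _ l b; existT _ k a].
Proof.
move=> hkl; have ne := adj_irr hkl; rewrite /= /crossing /= moveC //.
case: (eqVneq k i) => [eki|nki]; case: (eqVneq l i) => [eli|nli] /=; try lia.
- have nlj : l != j by apply: contraNneq nadj_ij => elj; rewrite -eki -elj.
  rewrite !(move_other _ b nli nlj); lia.
- have nkj : k != j by apply: contraNneq nadj_ji => ekj; rewrite -eli -ekj.
  rewrite !(move_other _ a nki nkj); lia.
Qed.

Lemma crossings_gp_eq u v : gp_eq adj u v ->
  forall s, crossings s u = crossings s v /\ walk s u = walk s v.
Proof.
elim=> {u v} [//|u v _ IH|u v w _ IH1 _ IH2|a b u v _ IH|k|k a b|k l a b hkl] s.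
- by have [-> ->] := IH s.
- by have [-> ->] := IH1 s; have [-> ->] := IH2 s.
- by rewrite !crossings_cat !walk_cat; have [-> ->] := IH (walk s a).
- by rewrite /= /crossing /= move1; split=> //; case: ifP => _; lia.
- by rewrite /= /walk /= /crossing /= !moveM; split=> //; case: ifP => _; lia.
- by rewrite crossings_swap // /walk /= moveC //; apply: adj_irr.
Qed.

End Crossings.

Section TrivialKernel.
Variables (n : nat) (G : 'I_n -> finGroupType) (adj : rel 'I_n).
Hypothesis swap_letters : forall k l (a : G k) (b : G l), k != l ->
  gp_eq adj [:: existT _ k a; existT _ l b] [:: existT _ l b; existT _ k a].

Definition coord_word (s : seq 'I_n) (p : forall m, G m) : word G :=
  [seq existT (fun m => G m) m (p m) | m <- s].

Lemma coord_word_absorb s p (u : letter G) : uniq s -> tag u \in s ->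
  gp_eq adj (u :: coord_word s p) (coord_word s (fun m => coord m u * p m)).
Proof.
elim: s p u => [|i s IH] p [k a] //= /andP [nis us]; rewrite inE.
case: (eqVneq k i) => [eki|nki] /= hk.
  subst k; have -> : coord_word s (fun m => coord m (existT _ i a) * p m) = coord_word s p.
    by apply/eq_in_map => m ms; rewrite coord_other ?mul1g //; apply: contraNneq nis => ->.
  by rewrite coord_id; exact: (gp_eq_catr (coord_word s p) (gp_mul adj a (p i))).
rewrite (@coord_other _ _ i k) // mul1g.
apply: gp_trans (gp_eq_catr _ (swap_letters a (p i) nki)) _.
exact/gp_eq_cons/IH.
Qed.

Lemma coord_word1 s : gp_eq adj (coord_word s (fun m => 1)) [::].
Proof.
elim: s => [|i s IH] /=; first exact: gp_refl.
exact: gp_trans (gp_eq_catr _ (gp_one _ _ i)) IH.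
Qed.

Lemma gp_eq_coord_word (w : word G) : gp_eq adj w (coord_word (enum 'I_n) (fun m => proj m w)).
Proof.
elim: w => [|u w IH]; first exact: gp_sym (coord_word1 _).
apply: gp_trans (gp_eq_cons u IH) _.
by apply: coord_word_absorb; rewrite ?enum_uniq ?mem_enum.
Qed.

Lemma kernel_trivial (w : word G) : in_kernel w -> gp_eq adj w [::].
Proof.
move=> kw; apply: gp_trans (gp_eq_coord_word w) _.
have -> : coord_word (enum 'I_n) (fun m => proj m w) = coord_word (enum 'I_n) (fun m => 1).
  by apply/eq_map => m; rewrite kw.
exact: coord_word1.
Qed.

End TrivialKernel.

Section Witness.
Variables (n : nat) (G : 'I_n -> finGroupType) (adj : rel 'I_n).
Variables (i j : 'I_n) (x : G i) (y : G j).
Hypotheses (adj_irr : forall k l, adj k l -> k != l) (nadj_ij : ~~ adj i j)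
  (nadj_ji : ~~ adj j i) (nij : i != j) (x_ntriv : x != 1) (y_ntriv : y != 1).

Let gx : word G := [:: existT _ i x].
Let cxy : word G := [:: existT _ i x; existT _ j y; existT _ i x^-1; existT _ j y^-1].

Lemma in_kernel_comm_letters : in_kernel cxy.
Proof.
move=> m; rewrite !proj_cons /proj /= mulg1.
case: (eqVneq i m) => [<-|nim].
  by rewrite !coord_id !(@coord_other _ _ i j) 1?eq_sym // !mul1g mulg1 mulgV.
rewrite !(@coord_other _ _ m i) // !mul1g.
case: (eqVneq j m) => [<-|njm]; first by rewrite !coord_id mulgV.
by rewrite !coord_other // !mulg1.
Qed.

(* The path of [x, [x, y]] in G_i x G_j enters (x, y) twice by an i-step
   (from (x^2, y) and from (1, y)) and leaves it only by j-steps. *)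
Lemma crossings_witness :
  crossings x y (1, 1) (gx ++ cxy ++ inv_word gx ++ inv_word cxy) = 2%R.
Proof.
have nji : j != i by rewrite eq_sym.
rewrite /inv_word /inv_letter /= /crossing /move /= !invgK eqxx (negbTE nji).
rewrite !coord_id !(@coord_other _ _ i j) // !(@coord_other _ _ j i) //.
rewrite !mulg1 !mul1g !mulgK !mulgV !mul1g.
have xx_x : (x * x == x) = false.
  by apply: contraNF x_ntriv => /eqP e; rewrite -(mulKg x x) e mulVg.
rewrite /at_xy !xpair_eqE xx_x ![1 == _]eq_sym (negbTE x_ntriv) (negbTE y_ntriv) !eqxx /=.
lia.
Qed.

Lemma comm_witness_not_derived :
  ~ in_derived adj (gx ++ cxy ++ inv_word gx ++ inv_word cxy).
Proof.
case=> w [cw eqw].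
have [hw _] := crossings_gp_eq x y adj_irr nadj_ij nadj_ji eqw (1, 1).
by move: hw; rewrite crossings_witness crossings_comm_prod.
Qed.

End Witness.

Theorem corollary5p5 (n : nat) (G : 'I_n -> finGroupType)
    (K : {set {set 'I_n}}) (HK : simplicial_complex K)
    (Hchordal : chordal (skel1 K))
    (Hrho : exists h : word G, in_kernel h /\ ~ gp_eq (skel1 K) h [::]) :
  exists (g h : word G), in_kernel h /\
    ~ in_derived (skel1 K) (g ++ h ++ inv_word g ++ inv_word h).
Proof.
have adj_irr k l : skel1 K k l -> k != l by case/andP.
have adj_sym k l : skel1 K k l = skel1 K l k by rewrite /skel1 eq_sym setUC.
case: (boolP [exists i, exists j, exists x : G i, exists y : G j,
               [&& i != j, ~~ skel1 K i j, x != 1 & y != 1]]) => [|no_pair].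
  case/existsP => i /existsP [j /existsP [x /existsP [y /and4P [nij nadj xn yn]]]].
  have nadj' : ~~ skel1 K j i by rewrite adj_sym.
  exists [:: existT _ i x], [:: existT _ i x; existT _ j y; existT _ i x^-1; existT _ j y^-1].
  split; first exact: in_kernel_comm_letters.
  exact: comm_witness_not_derived.
exfalso; case: Hrho => h [kh []]; apply: kernel_trivial kh => k l a b nkl.
case hkl : (skel1 K k l); first exact: gp_comm.
have [a1 | b1] : a = 1 \/ b = 1.
  case: (eqVneq a 1) => [|an]; [by left | right; apply/eqP].
  apply: contraNT no_pair => bn; apply/existsP; exists k; apply/existsP; exists l.
  by apply/existsP; exists a; apply/existsP; exists b; rewrite nkl hkl an bn.
- rewrite a1; apply: gp_trans (gp_eq_catr [:: existT _ l b] (@gp_one n G _ k)) _.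
  exact/gp_sym/(gp_eq_cons (existT _ l b) (@gp_one n G _ k)).
- rewrite b1; apply: gp_trans (gp_eq_cons (existT _ k a) (@gp_one n G _ l)) _.
  exact/gp_sym/(gp_eq_catr [:: existT _ k a] (@gp_one n G _ l)).
Qed.
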